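(* Let $L$ be a lattice with canonical extension $L^\delta$, and let $K(L^\delta)$ denote the set of closed elements of $L^\delta$. If $k\in K(L^\delta)$ is finitely prime and $o=\bigvee\{b\in L \mid b\not\geq k\}$ (join computed in $L^\delta$), then $k\not\leq o$.
   Context: The canonical extension of a lattice $L$ is a complete lattice $L^\delta$ containing $L$ as a sublattice such that (denseness) every element of $L^\delta$ is a join of meets of elements of $L$ and a meet of joins of elements of $L$, and (compactness) for all $S,T\subseteq L$, if $\bigwedge S\leq\bigvee T$ in $L^\delta$ then $\bigwedge S'\leq\bigvee T'$ for some finite $S'\subseteq S$, $T'\subseteq T$. $K(L^\delta)$ is the set of elements of $L^\delta$ that are meets of subsets of $L$ (closed elements). An element $u\in L^\delta$ is finitely prime if $u\neq\bot$ and for all $v,w\in L^\delta$, $u\leq v\vee w$ implies $u\leq v$ or $u\leq w$. *)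

From mathcomp Require Import all_boot all_order.
Set Implicit Arguments. Unset Strict Implicit. Unset Printing Implicit Defensive.
Import Order.Theory.
Local Open Scope order_scope.

Section CanExt.
Context {dL dD : Order.disp_t} {L : latticeType dL} {D : latticeType dD}.

Definition is_lub (A : D -> Prop) (x : D) :=
  (forall a, A a -> a <= x) /\ (forall y, (forall a, A a -> a <= y) -> x <= y).
Definition is_glb (A : D -> Prop) (x : D) :=
  (forall a, A a -> x <= a) /\ (forall y, (forall a, A a -> y <= a) -> y <= x).

Definition img (e : L -> D) (S : L -> Prop) : D -> Prop :=
  fun x => exists2 b, S b & x = e b.

Record canonical_extension (e : L -> D)
    (sup inf : (D -> Prop) -> D) : Prop := {
  ce_inj : injective e;
  ce_meet : forall x y, e (x `&` y) = e x `&` e y;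
  ce_join : forall x y, e (x `|` y) = e x `|` e y;
  ce_sup : forall A, is_lub A (sup A);
  ce_inf : forall A, is_glb A (inf A);
  ce_dense_join : forall u : D, exists2 M : D -> Prop, u = sup M &
      forall x, M x -> exists S : L -> Prop, x = inf (img e S);
  ce_dense_meet : forall u : D, exists2 M : D -> Prop, u = inf M &
      forall x, M x -> exists S : L -> Prop, x = sup (img e S);
  ce_compact : forall S T : L -> Prop,
      inf (img e S) <= sup (img e T) ->
      exists S' T' : seq L, [/\ forall b, b \in S' -> S b,
                                forall b, b \in T' -> T b &
        inf (img e (fun b => b \in S')) <= sup (img e (fun b => b \in T'))]
}.

Definition closed_elt (e : L -> D) (inf : (D -> Prop) -> D) (u : D) :=
  exists S : L -> Prop, u = inf (img e S).

Definition fin_prime (sup : (D -> Prop) -> D) (u : D) :=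
  u <> sup (fun _ => False) /\
  forall v w : D, u <= v `|` w -> u <= v \/ u <= w.

End CanExt.

(* Write the closed element k as the meet of e[S] for some S.  If k were below the
   join of e[T], T = {b | ~ k <= e b}, compactness would give finite S' of S and T'
   of T with /\ e[S'] <= \/ e[T'], hence k <= \/ e[T'].  A finitely prime element
   below the join of a finite set lies below one of its members (the empty join is
   the bottom, which k is not), so k <= e b for some b in T', a contradiction. *)
From mathcomp Require Import all_boot all_order.
Import Order.Theory.
Set Implicit Arguments. Unset Strict Implicit.
Local Open Scope order_scope.

Section CompleteBounds.
Context {d : Order.disp_t} {D : latticeType d}.
Variables sup inf : (D -> Prop) -> D.
Hypothesis sup_lub : forall A, is_lub A (sup A).
Hypothesis inf_glb : forall A, is_glb A (inf A).

Lemma sup_ub (A : D -> Prop) a : A a -> a <= sup A.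
Proof. exact: (sup_lub A).1. Qed.

Lemma sup_least (A : D -> Prop) y : (forall a, A a -> a <= y) -> sup A <= y.
Proof. exact: (sup_lub A).2. Qed.

Lemma sup_mono (A B : D -> Prop) : (forall a, A a -> B a) -> sup A <= sup B.
Proof. by move=> AB; apply: sup_least => a /AB; apply: sup_ub. Qed.

Lemma inf_anti (A B : D -> Prop) : (forall a, A a -> B a) -> inf B <= inf A.
Proof. by move=> AB; apply: (inf_glb A).2 => a /AB; apply: (inf_glb B).1. Qed.

Lemma sup_cons (x : D) (s : seq D) :
  sup (fun y => y \in x :: s) <= x `|` sup (fun y => y \in s).
Proof.
apply: sup_least => a; rewrite inE => /orP[/eqP -> | a_s]; first exact: leUl.
by apply: le_trans (leUr _ _); apply: sup_ub.
Qed.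

Lemma fin_prime_le_sup_seq (u : D) (s : seq D) :
  fin_prime sup u -> u <= sup (fun y => y \in s) -> exists2 x, x \in s & u <= x.
Proof.
case=> u_neq_bot u_prime; elim: s => [|x s IHs] u_le.
  have u_le_bot : u <= sup (fun _ => False).
    exact: le_trans u_le (sup_mono _).
  by case: u_neq_bot; apply/le_anti; rewrite u_le_bot sup_least.
have /u_prime[u_le_x | /IHs[y y_s u_le_y]] := le_trans u_le (sup_cons x s).
  by exists x; rewrite ?mem_head.
by exists y; rewrite ?inE ?y_s ?orbT.
Qed.

End CompleteBounds.

Theorem lemma2p3 (dL dD : Order.disp_t) (L : latticeType dL) (D : latticeType dD)
  (e : L -> D) (sup inf : (D -> Prop) -> D)
  (hCE : canonical_extension e sup inf)
  (k : D) (hk : closed_elt e inf k) (hprime : fin_prime sup k) :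
  ~ (k <= sup (img e (fun b : L => ~ (k <= e b)))).
Proof.
case: hk => S kE k_le_sup; rewrite kE in k_le_sup.
have [S' [T' [S'S T'T le_S'_T']]] := ce_compact hCE k_le_sup.
have k_le_T' : k <= sup (fun x => x \in map e T').
  have k_le_S' : k <= inf (img e (fun b => b \in S')).
    by rewrite kE; apply: (inf_anti (ce_inf hCE)) => _ [b /S'S Sb ->]; exists b.
  apply: le_trans k_le_S' (le_trans le_S'_T' _).
  by apply: (sup_mono (ce_sup hCE)) => _ [b b_T' ->]; apply: map_f.
have [_ /mapP[b /T'T b_T ->]] := fin_prime_le_sup_seq (ce_sup hCE) hprime k_le_T'.
by rewrite kE.
Qed.
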